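(* Let $a,b\in \mathcal{A}^{\mathrm{gcEP}}$. Then the following are equivalent: (1) $a\leq^{\mathrm{gcEP}}b$. (2) There exist $e_1=aa^{\mathrm{gcEP}}$ and $e_2=e_2^*=e_2^2$ such that $a=\begin{pmatrix} t_1&s_1&s_2\\ 0&n_1&n_2\\ 0&n_3&n_4\end{pmatrix}_{e\times e}$, $b=\begin{pmatrix} t_1&s_1&s_2\\ 0&t_3&t_4\\ 0&0&t_5\end{pmatrix}_{e\times e}$, where $e=\{ e_1,e_2,1-e_1-e_2\}$, $t_1\in (e_1\mathcal{A}e_1)^{-1}$, $t_3\in (e_2\mathcal{A}e_2)^{-1}$ and $n_1+n_2+n_3+n_4,\ t_5\in \mathcal{A}^{qnil}$.
   Context: $\mathcal{A}$ is a complex Banach *-algebra with identity; $\mathcal{A}^{qnil}$ is the set of quasinilpotent elements. An element $a$ has a generalized core-EP inverse if there is $x$ with $x=ax^2$, $(ax)^*=ax$, $\lim_{n\to\infty}\|a^n-xa^{n+1}\|^{1/n}=0$; this $x$ is unique, denoted $a^{\mathrm{gcEP}}$, and $\mathcal{A}^{\mathrm{gcEP}}$ is the set of such $a$. For $a,b\in\mathcal{A}^{\mathrm{gcEP}}$, $a\leq^{\mathrm{gcEP}}b$ means $aa^{\mathrm{gcEP}}=ba^{\mathrm{gcEP}}$ and $a^{\mathrm{gcEP}}a=a^{\mathrm{gcEP}}b$. For a set $e=\{e_1,\dots,e_n\}$ of idempotents with $1=e_1+\cdots+e_n$ and $e_ie_j=0$ ($i\neq j$), an element $x$ is written in matrix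 form $x=(e_ixe_j)_{e\times e}$. *)

From HB Require Import structures.
From mathcomp Require Import all_boot all_order all_algebra.
From mathcomp Require Import all_classical all_reals.
From mathcomp Require Import topology normedtype sequences exp.
From mathcomp Require Import complex.
Set Implicit Arguments. Unset Strict Implicit. Unset Printing Implicit Defensive.
Import Order.TTheory GRing.Theory Num.Theory.
Local Open Scope ring_scope.
Local Open Scope complex_scope.
Local Open Scope classical_set_scope.
Import numFieldNormedType.Exports.

HB.mixin Record isBanachStarAlgebra (R : realType) A of GRing.Algebra R[i] A := {
  bnorm : A -> R;
  star : A -> A;
  bnormD : forall x y : A, bnorm (x + y) <= bnorm x + bnorm y;
  bnormZ : forall (c : R[i]) (x : A), bnorm (c *: x) = ComplexField.Normc.normc c * bnorm x;
  bnorm_eq0 : forall x : A, bnorm x = 0 -> x = 0;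
  bnormM : forall x y : A, bnorm (x * y) <= bnorm x * bnorm y;
  bnorm1 : bnorm 1 = 1;
  bnorm_complete : forall u : nat -> A,
    (forall e : R, 0 < e -> exists N : nat, forall m n : nat,
        (N <= m)%N -> (N <= n)%N -> bnorm (u m - u n) < e) ->
    exists l : A, forall e : R, 0 < e -> exists N : nat, forall n : nat,
        (N <= n)%N -> bnorm (u n - l) < e;
  starD : forall x y : A, star (x + y) = star x + star y;
  starZ : forall (c : R[i]) (x : A), star (c *: x) = conjc c *: star x;
  starM : forall x y : A, star (x * y) = star y * star x;
  starK : forall x : A, star (star x) = x
}.

#[short(type="banachStarAlgType")]
HB.structure Definition BanachStarAlgebra (R : realType) :=
  { A of isBanachStarAlgebra R A & GRing.Algebra R[i] A }.

Section Defs.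
Variables (R : realType) (A : banachStarAlgType R).

Definition qnil (a : A) : Prop :=
  (fun n : nat => (bnorm (a ^+ n)) `^ (n%:R^-1)) @ \oo --> (0 : R).

Definition is_gcEP (a x : A) : Prop :=
  [/\ x = a * x ^+ 2, star (a * x) = a * x &
      (fun n : nat => (bnorm (a ^+ n - x * a ^+ n.+1)) `^ (n%:R^-1))
        @ \oo --> (0 : R)].

Definition has_gcEP (a : A) : Prop := exists x, is_gcEP a x.

(* a^gcEP (the unique gcEP inverse when it exists) *)
Definition gcEP (a : A) : A := xget 0 [set x | is_gcEP a x].

Definition gcEP_le (a b : A) : Prop :=
  a * gcEP a = b * gcEP a /\ gcEP a * a = gcEP a * b.

Definition corner_inv (p t : A) : Prop :=
  t = p * t * p /\ exists u : A, [/\ u = p * u * p, t * u = p & u * t = p].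

End Defs.

(* Write x = a^gcEP and e = a x.  Each identity needed about x, namely
   x a x = x, (1 - e) a e = 0 and x a e = e, can be written as
   c = u (a^n - x a^(n+1)) w_n with ||w_n|| growing at most geometrically, so
   it is forced by ||a^n - x a^(n+1)||^(1/n) -> 0; the same estimate makes the
   corner (1 - e) a (1 - e) quasinilpotent.
   If a <=gcEP b, then b e = a e and e b = e a, so e = b^n e x^n for all n and
   the same argument for b shows that e lies under p = b b^gcEP.  Taking
   e2 = p - e and e3 = 1 - p, the block forms of a and b come from the
   core-EP decompositions of a along e and of b along p.  Conversely, equal
   first rows and first columns give e a = e b and a e = b e, i.e. a <=gcEP b. *)

From HB Require Import structures.
From mathcomp Require Import all_boot all_order all_algebra.
From mathcomp Require Import all_classical all_reals.
From mathcomp Require Import topology normedtype sequences exp.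
From mathcomp Require Import complex.
Import Order.TTheory GRing.Theory Num.Theory.
Import numFieldNormedType.Exports.
Local Open Scope ring_scope.
Local Open Scope classical_set_scope.

Set Implicit Arguments.
Unset Strict Implicit.
Unset Printing Implicit Defensive.

Section RootNull.
Variable R : realType.
Implicit Types (u v w : nat -> R) (d K M : R).

Definition root_null u : Prop :=
  (fun n : nat => u n `^ n%:R^-1) @ \oo --> (0 : R).

Lemma powR_invn_exprn d n : (0 < n)%N -> 0 <= d -> (d `^ n%:R^-1) ^+ n = d.
Proof.
move=> n_gt0 d_ge0; rewrite -powR_mulrn ?powR_ge0// -powRrM mulVf ?powRr1//.
by rewrite pnatr_eq0 -lt0n.
Qed.

Lemma cvg0_exprnn w : (forall n, 0 <= w n) -> w @ \oo --> 0 ->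
  (fun n => w n ^+ n) @ \oo --> 0.
Proof.
move=> w_ge0 w_cvg.
apply: (@squeeze_cvgr _ _ _ _ (fun=> 0) (fun n => 2^-1 ^+ n)); last 2 first.
- exact: cvg_cst.
- by apply: cvg_expr; rewrite ger0_norm ?invr_ge0// invf_lt1// ltr1n.
near=> n; rewrite exprn_ge0//=; apply: lerXn2r; rewrite ?nnegrE ?invr_ge0//.
by near: n; apply: (cvgr_le 0 w_cvg); rewrite invr_gt0.
Unshelve. all: end_near.
Qed.

Lemma root_null_expr_cvg0 u M : 0 <= M -> (forall n, 0 <= u n) -> root_null u ->
  (fun n => M ^+ n * u n) @ \oo --> 0.
Proof.
move=> M_ge0 u_ge0 u_null.
have w_cvg : (fun n => M * u n `^ n%:R^-1) @ \oo --> 0.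
  by rewrite -(mulr0 M); apply: cvgM => //; exact: cvg_cst.
apply: cvg_trans (cvg0_exprnn _ w_cvg); last by move=> n; rewrite mulr_ge0 ?powR_ge0.
apply: near_eq_cvg; near=> n.
have n_gt0 : (0 < n)%N by near: n; exact: nbhs_infty_gt.
by rewrite exprMn powR_invn_exprn.
Unshelve. all: end_near.
Qed.

Lemma root_null_le u v K : 1 <= K -> (forall n, 0 <= u n) ->
  (forall n, (0 < n)%N -> u n <= K * v n) -> root_null v -> root_null u.
Proof.
move=> K_ge1 u_ge0 uv v_null.
have K_ge0 : 0 <= K by apply: le_trans K_ge1.
apply: (@squeeze_cvgr _ _ _ _ (fun=> 0) (fun n => K * v n `^ n%:R^-1)); last 2 first.
- exact: cvg_cst.
- by rewrite -(mulr0 K); apply: cvgM => //; exact: cvg_cst.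
near=> n; have n_gt0 : (0 < n)%N by near: n; exact: nbhs_infty_gt.
have v_ge0 : 0 <= v n.
  rewrite -(pmulr_rge0 _ (lt_le_trans ltr01 K_ge1)).
  exact: le_trans (u_ge0 n) (uv n n_gt0).
rewrite powR_ge0 /=; apply: (le_trans (ge0_ler_powR _ _ _ (uv n n_gt0))).
- by rewrite invr_ge0.
- by rewrite nnegrE.
- by rewrite nnegrE mulr_ge0.
rewrite powRM //; apply: ler_wpM2r; first exact: powR_ge0.
by apply: ler1_powR => //; rewrite invf_le1 ?ltr0n // ler1n.
Unshelve. all: end_near.
Qed.

End RootNull.

Section RingBlocks.
Variable T : pzRingType.
Implicit Types c d q u v : T.

Lemma blocks_eq_mulr e1 e2 e3 c d q : e1 + e2 + e3 = 1 ->
  e1 * c * q = e1 * d * q -> e2 * c * q = e2 * d * q -> e3 * c * q = e3 * d * q ->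
  c * q = d * q.
Proof.
move=> one E1 E2 E3.
by rewrite -(mul1r (c * q)) -(mul1r (d * q)) -one !mulrDl !mulrA E1 E2 E3.
Qed.

Lemma blocks_eq_mull e1 e2 e3 c d q : e1 + e2 + e3 = 1 ->
  q * c * e1 = q * d * e1 -> q * c * e2 = q * d * e2 -> q * c * e3 = q * d * e3 ->
  q * c = q * d.
Proof.
move=> one E1 E2 E3.
by rewrite -(mulr1 (q * c)) -(mulr1 (q * d)) -one !mulrDr E1 E2 E3.
Qed.

Lemma sum_blocks2 u v c :
  u * c * u + u * c * v + v * c * u + v * c * v = (u + v) * c * (u + v).
Proof. by rewrite mulrDl !mulrDr !mulrDl !addrA [_ + v * c * u]addrAC. Qed.

Lemma compress_idem q c : q * q = q -> q * c * q = q * (q * c * q) * q.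
Proof. by move=> qq; rewrite [in RHS]mulrA [in RHS]mulrA qq -[in RHS]mulrA qq. Qed.

End RingBlocks.

Section BanachStarAlgebra.
Variables (R : realType) (A : banachStarAlgType R).
Implicit Types (a b c q u v x y z : A).

Lemma bnorm0 : bnorm (0 : A) = 0.
Proof.
have := bnormZ (0 : R[i]) (0 : A); rewrite scale0r => ->.
by rewrite /= expr0n /= addr0 sqrtr0 mul0r.
Qed.

Lemma bnormN z : bnorm (- z) = bnorm z.
Proof.
have := bnormZ (-1 : R[i]) z; rewrite scaleN1r => ->.
by rewrite /= oppr0 sqrrN expr1n expr0n /= addr0 sqrtr1 mul1r.
Qed.

Lemma bnorm_ge0 z : 0 <= bnorm z.
Proof.
have := bnormD z (- z); rewrite subrr bnorm0 bnormN.
by rewrite -mulr2n pmulrn_lge0.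
Qed.

Lemma bnormX z n : bnorm (z ^+ n) <= bnorm z ^+ n.
Proof.
elim: n => [|n IHn]; first by rewrite !expr0 bnorm1.
rewrite !exprS; apply: le_trans (bnormM _ _) _.
by apply: ler_wpM2l; [exact: bnorm_ge0 | exact: IHn].
Qed.

Lemma bnormX_le z k n : (k <= n)%N -> bnorm (z ^+ k) <= (bnorm z + 1) ^+ n.
Proof.
move=> kn; apply: le_trans (bnormX z k) _.
have z_ge0 := bnorm_ge0 z.
apply: (@le_trans _ _ ((bnorm z + 1) ^+ k)).
  by apply: lerXn2r; rewrite ?nnegrE ?addr_ge0 // lerDl.
by apply: ler_weXn2l => //; rewrite lerDr.
Qed.

Lemma starB u v : star (u - v) = star u - star v.
Proof. by have := starD (u - v) v; rewrite subrK => ->; rewrite addrK. Qed.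

Lemma eq0_of_root_null_bound c (w : nat -> R) (K M : R) :
  0 <= M -> (forall n, 0 <= w n) -> root_null w ->
  (forall n, (1 < n)%N -> bnorm c <= K * (M ^+ n * w n)) -> c = 0.
Proof.
move=> M_ge0 w_ge0 w_null c_le; apply: bnorm_eq0; apply/eqP.
rewrite eq_le bnorm_ge0 andbT.
have bound_cvg : (fun n => K * (M ^+ n * w n)) @ \oo --> 0.
  by rewrite -(mulr0 K); apply: cvgM; [exact: cvg_cst | exact: root_null_expr_cvg0].
apply: (cvgr_to_ge bound_cvg); near=> n; apply: c_le.
by near: n; exact: nbhs_infty_gt.
Unshelve. all: end_near.
Qed.

Definition gcEP_defect a x n : R := bnorm (a ^+ n - x * a ^+ n.+1).

Section GcEPInverse.
Variables a x : A.
Hypothesis hx : is_gcEP a x.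

Local Notation e := (a * x).

Lemma gcEP_defect_eq0 c u (w : nat -> A) (M : R) : 0 <= M ->
  (forall n, (1 < n)%N -> bnorm (w n) <= M ^+ n.+1) ->
  (forall n, (1 < n)%N -> c = u * (a ^+ n - x * a ^+ n.+1) * w n) -> c = 0.
Proof.
move=> M_ge0 w_le c_eq.
have [_ _ defect_null] := hx.
apply: (@eq0_of_root_null_bound c (gcEP_defect a x) (bnorm u * M) M) => //.
  by move=> n; exact: bnorm_ge0.
move=> n n_gt1; rewrite {1}(c_eq n n_gt1) /gcEP_defect.
apply: le_trans (bnormM _ _) _.
apply: le_trans (ler_pM (bnorm_ge0 _) (bnorm_ge0 _) (bnormM u _) (w_le n n_gt1)) _.
by rewrite [M ^+ n.+1]exprS mulrACA [M ^+ n * _]mulrC.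
Qed.

Lemma gcEP_axx : a * x * x = x.
Proof. by have [x_eq _ _] := hx; rewrite -mulrA -expr2 -x_eq. Qed.

Lemma expr_gcEP n : a ^+ n * x ^+ n.+1 = x.
Proof.
elim: n => [|n IHn]; first by rewrite mul1r expr1.
have a_xpow : a * x ^+ n.+2 = x ^+ n.+1 by rewrite !exprS !mulrA gcEP_axx.
by rewrite exprSr -mulrA a_xpow.
Qed.

Lemma expr_gcEP_proj n : a ^+ n.+1 * x ^+ n.+1 = e.
Proof. by rewrite exprS -mulrA expr_gcEP. Qed.

Lemma gcEP_xax : x * a * x = x.
Proof.
apply/eqP; rewrite eq_sym -subr_eq0; apply/eqP.
apply: (@gcEP_defect_eq0 _ 1 (fun n => x ^+ n.+1) (bnorm x + 1)).
- by rewrite addr_ge0 ?bnorm_ge0.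
- by move=> n _; exact: bnormX_le.
move=> n _; rewrite mul1r mulrBl expr_gcEP.
by rewrite -[x * a ^+ _ * _]mulrA expr_gcEP_proj mulrA.
Qed.

Lemma gcEP_x_proj : x * e = x.
Proof. by rewrite mulrA gcEP_xax. Qed.

Lemma gcEP_proj_idem : e * e = e.
Proof. by rewrite -mulrA gcEP_x_proj. Qed.

Lemma gcEP_coproj_x : (1 - e) * x = 0.
Proof. by rewrite mulrBl mul1r gcEP_axx subrr. Qed.

Lemma gcEP_proj_invariant : a * e = e * a * e.
Proof.
apply/eqP; rewrite -subr_eq0 -{1}[a * e]mul1r -mulrA -mulrBl; apply/eqP.
apply: (@gcEP_defect_eq0 _ (1 - e) (fun n => x ^+ n.-1) (bnorm x + 1)).
- by rewrite addr_ge0 ?bnorm_ge0.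
- by move=> [|n] _; rewrite ?(bnormX_le _ (leqW _)).
move=> [|[|n]] // _ /=.
rewrite mulrBr [(1 - e) * (x * _)]mulrA gcEP_coproj_x mul0r subr0.
by rewrite -mulrA [a ^+ n.+2]exprS -mulrA expr_gcEP_proj.
Qed.

Lemma gcEP_proj_annihilator u : u * e = 0 -> u * a * e = 0.
Proof.
by move=> ue0; rewrite -mulrA gcEP_proj_invariant !mulrA -(mulrA u) ue0 !mul0r.
Qed.

Lemma gcEP_xa_proj : x * a * e = e.
Proof.
apply/eqP; rewrite eq_sym -subr_eq0; apply/eqP.
apply: (@gcEP_defect_eq0 _ 1 (fun n => x ^+ n) (bnorm x + 1)).
- by rewrite addr_ge0 ?bnorm_ge0.
- by move=> n _; exact: bnormX_le.
move=> [|n] // _; rewrite mul1r mulrBl expr_gcEP_proj.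
by rewrite [a ^+ n.+2]exprS [x * (a * _)]mulrA -[x * a * _ * _]mulrA expr_gcEP_proj.
Qed.

Lemma qnil_gcEP_cocorner : qnil ((1 - e) * a * (1 - e)).
Proof.
have [_ _ defect_null] := hx.
have coproj_a : (1 - e) * a * (1 - e) = (1 - e) * a.
  rewrite mulrBr mulr1 gcEP_proj_annihilator ?subr0 //.
  by rewrite mulrBl mul1r gcEP_proj_idem subrr.
apply: (@root_null_le _ _ (gcEP_defect a x) (bnorm (1 - e) + 1)) => //.
- by rewrite lerDr bnorm_ge0.
- by move=> n; exact: bnorm_ge0.
move=> [|n] // _.
have -> : ((1 - e) * a * (1 - e)) ^+ n.+1 = (1 - e) * a ^+ n.+1.
  elim: n => [|n IHn]; first by rewrite !expr1 coproj_a.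
  by rewrite exprS IHn coproj_a mulrA coproj_a -mulrA -exprS.
have -> : (1 - e) * a ^+ n.+1 = (1 - e) * (a ^+ n.+1 - x * a ^+ n.+2).
  by rewrite mulrBr mulrA gcEP_coproj_x mul0r subr0.
apply: le_trans (bnormM _ _) _; apply: ler_wpM2r; first exact: bnorm_ge0.
by rewrite lerDl.
Qed.

Lemma gcEP_corner_inv : corner_inv e (e * a * e).
Proof.
split; first exact: compress_idem gcEP_proj_idem.
exists x; split.
- by rewrite gcEP_axx gcEP_x_proj.
- by rewrite -mulrA gcEP_axx -mulrA gcEP_proj_idem.
- by rewrite [x * _]mulrA [x * (e * a)]mulrA gcEP_x_proj gcEP_xa_proj.
Qed.

Lemma gcEP_proj_fix q z : (forall n, (0 < n)%N -> q = a ^+ n * q * z ^+ n) ->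
  e * q = q.
Proof.
move=> q_eq; apply/eqP; rewrite eq_sym -subr_eq0 -{1}[q]mul1r -mulrBl; apply/eqP.
pose M := bnorm q + bnorm z + 1.
have [q_ge0 z_ge0] := (bnorm_ge0 q, bnorm_ge0 z).
apply: (@gcEP_defect_eq0 _ (1 - e) (fun n => q * z ^+ n) M).
- by rewrite !addr_ge0.
- move=> n _; apply: le_trans (bnormM _ _) _; rewrite exprS.
  apply: ler_pM; rewrite ?bnorm_ge0 //; first by rewrite /M -addrA lerDl addr_ge0.
  apply: le_trans (bnormX_le _ (leqnn n)) _.
  by rewrite /M lerXn2r ?nnegrE ?addr_ge0 // -addrA lerDr.
move=> n n_gt1.
rewrite mulrBr [(1 - e) * (x * _)]mulrA gcEP_coproj_x mul0r subr0.
by rewrite -!mulrA [a ^+ n * _]mulrA -q_eq // ltnW.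
Qed.

End GcEPInverse.

Definition gcEP_corner_forms a b x : Prop :=
  let e1 := a * x in
  exists e2 : A,
    e2 = star e2 /\ e2 = e2 * e2 /\ e1 * e2 = 0 /\ e2 * e1 = 0 /\
    let e3 := 1 - e1 - e2 in
    exists (t1 s1 s2 n1 n2 n3 n4 t3 t4 t5 : A),
      (e1 * a * e1 = t1 /\ e1 * a * e2 = s1 /\ e1 * a * e3 = s2 /\
       e2 * a * e1 = 0  /\ e2 * a * e2 = n1 /\ e2 * a * e3 = n2 /\
       e3 * a * e1 = 0  /\ e3 * a * e2 = n3 /\ e3 * a * e3 = n4) /\
      (e1 * b * e1 = t1 /\ e1 * b * e2 = s1 /\ e1 * b * e3 = s2 /\
       e2 * b * e1 = 0  /\ e2 * b * e2 = t3 /\ e2 * b * e3 = t4 /\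
       e3 * b * e1 = 0  /\ e3 * b * e2 = 0  /\ e3 * b * e3 = t5) /\
      corner_inv e1 t1 /\ corner_inv e2 t3 /\
      qnil (n1 + n2 + n3 + n4) /\ qnil t5.

Section GcEPOrder.
Variables a b x y : A.
Hypotheses (hx : is_gcEP a x) (hy : is_gcEP b y).
Hypotheses (le_r : a * x = b * x) (le_l : x * a = x * b).

Local Notation e := (a * x).
Local Notation p := (b * y).
Local Notation f := (p - e).

Lemma gcEP_le_mul_proj : b * e = a * e.
Proof.
rewrite (gcEP_proj_invariant hx) -{1}(gcEP_xa_proj hx).
by rewrite !mulrA le_r.
Qed.

Lemma gcEP_le_proj_mul : e * b = e * a.
Proof. by rewrite -mulrA -le_l mulrA. Qed.

Lemma gcEP_le_expr_proj n : b ^+ n * e = a ^+ n * e.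
Proof.
elim: n => [|n IHn]; first by rewrite !expr0.
rewrite !exprSr -!mulrA gcEP_le_mul_proj (gcEP_proj_invariant hx) !mulrA.
by rewrite -[b ^+ n * a * x]mulrA IHn mulrA.
Qed.

Lemma gcEP_le_proj_mulr : p * e = e.
Proof.
apply: (gcEP_proj_fix hy (z := x)) => -[|n] // _.
rewrite gcEP_le_expr_proj mulrA -exprSr -mulrA -exprS.
by rewrite (expr_gcEP_proj hx).
Qed.

Lemma gcEP_le_proj_mull : e * p = e.
Proof.
have [_ e_star _] := hx; have [_ p_star _] := hy.
by rewrite -{1}e_star -p_star -starM gcEP_le_proj_mulr e_star.
Qed.

Lemma gcEP_le_inv_proj : y * e = x.
Proof.
have bex : b * e * x = e by rewrite gcEP_le_mul_proj -mulrA (gcEP_axx hx).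
have ybe : y * b * e = e.
  by rewrite -{1}gcEP_le_proj_mulr mulrA (gcEP_xa_proj hy) gcEP_le_proj_mulr.
by rewrite -{1}bex [y * _]mulrA [y * (b * _)]mulrA ybe (gcEP_axx hx).
Qed.

Lemma gcEP_le_diff_orth_r : f * e = 0.
Proof. by rewrite mulrBl gcEP_le_proj_mulr (gcEP_proj_idem hx) subrr. Qed.

Lemma gcEP_le_diff_orth_l : e * f = 0.
Proof. by rewrite mulrBr gcEP_le_proj_mull (gcEP_proj_idem hx) subrr. Qed.

Lemma gcEP_le_diff_idem : f * f = f.
Proof.
rewrite mulrBr gcEP_le_diff_orth_r subr0 mulrBl (gcEP_proj_idem hy).
by rewrite gcEP_le_proj_mull.
Qed.

Lemma gcEP_le_diff_star : star f = f.
Proof.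
by have [[_ e_star _] [_ p_star _]] := (hx, hy); rewrite starB e_star p_star.
Qed.

Lemma gcEP_le_diff_mulr_proj : f * p = f.
Proof. by rewrite mulrBl (gcEP_proj_idem hy) gcEP_le_proj_mull. Qed.

Lemma gcEP_le_proj_mulr_diff : p * f = f.
Proof. by rewrite mulrBr (gcEP_proj_idem hy) gcEP_le_proj_mulr. Qed.

Lemma gcEP_le_diff_b_proj : f * b * e = 0.
Proof.
rewrite -mulrA gcEP_le_mul_proj mulrA (gcEP_proj_annihilator hx) //.
exact: gcEP_le_diff_orth_r.
Qed.

Lemma gcEP_le_corner_inv_diff : corner_inv f (f * b * f).
Proof.
have fx : f * x = 0.
  by rewrite -{2}(gcEP_axx hx) mulrA gcEP_le_diff_orth_r mul0r.
have fbf : f * b * f = f * b * p.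
  by rewrite [in LHS]mulrBr gcEP_le_diff_b_proj subr0.
have fyf : f * y * f = f * y.
  by rewrite [in LHS]mulrBr -!mulrA (gcEP_x_proj hy) gcEP_le_inv_proj fx subr0.
split; first exact: compress_idem gcEP_le_diff_idem.
exists (f * y * f); split; first exact: compress_idem gcEP_le_diff_idem.
- rewrite fbf fyf -mulrA [p * _]mulrA gcEP_le_proj_mulr_diff mulrA fbf.
  by rewrite -mulrA (gcEP_axx hy) -mulrA gcEP_le_diff_mulr_proj.
- rewrite fyf fbf [f * y * _]mulrA [f * y * (f * b)]mulrA fyf.
  rewrite -(mulrA f y) -(mulrA f (y * b)) (gcEP_xa_proj hy).
  exact: gcEP_le_diff_mulr_proj.
Qed.

Lemma gcEP_corner_forms_of_le : gcEP_corner_forms a b x.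
Proof.
have coproj_e : (1 - p) * e = 0.
  by rewrite mulrBl mul1r gcEP_le_proj_mulr subrr.
have coproj_p : (1 - p) * p = 0 by rewrite mulrBl mul1r (gcEP_proj_idem hy) subrr.
have fa_e := gcEP_proj_annihilator hx gcEP_le_diff_orth_r.
have fb_e := gcEP_le_diff_b_proj.
have coproj_a_e := gcEP_proj_annihilator hx coproj_e.
have coproj_b_e : (1 - p) * b * e = 0.
  by rewrite -mulrA gcEP_le_mul_proj [(1 - p) * _]mulrA.
have coproj_b_f : (1 - p) * b * f = 0.
  by rewrite mulrBr coproj_b_e (gcEP_proj_annihilator hy coproj_p) subrr.
rewrite /gcEP_corner_forms /=; exists f.
have -> : 1 - e - f = 1 - p by rewrite opprB addrA subrK.
split; first by rewrite gcEP_le_diff_star.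
split; first by rewrite gcEP_le_diff_idem.
split; first exact: gcEP_le_diff_orth_l.
split; first exact: gcEP_le_diff_orth_r.
exists (e * a * e), (e * a * f), (e * a * (1 - p)), (f * a * f), (f * a * (1 - p)),
  ((1 - p) * a * f), ((1 - p) * a * (1 - p)), (f * b * f), (f * b * (1 - p)),
  ((1 - p) * b * (1 - p)).
rewrite gcEP_le_proj_mul.
(* Each nonzero entry is its own witness; each zero entry is a hypothesis above. *)
split; first by do !split.
split; first by do !split.
split; first exact: gcEP_corner_inv hx.
split; first exact: gcEP_le_corner_inv_diff.
split; last exact: qnil_gcEP_cocorner hy.
rewrite sum_blocks2.
have -> : f + (1 - p) = 1 - e by rewrite addrC addrA subrK.
exact: qnil_gcEP_cocorner hx.
Qed.

End GcEPOrder.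

Lemma gcEP_le_of_corner_forms a b x : is_gcEP a x -> gcEP_corner_forms a b x ->
  a * x = b * x /\ x * a = x * b.
Proof.
move=> hx [e2 [_ [_ [_ [_ [t1 [s1 [s2 [n1 [n2 [n3 [n4 [t3 [t4 [t5]]]]]]]]]]]]]]].
move=> [[a11 [a12 [a13 [a21 [_ [_ [a31 _]]]]]]]].
move=> [[b11 [b12 [b13 [b21 [_ [_ [b31 _]]]]]]] _].
have one : a * x + e2 + (1 - a * x - e2) = 1.
  by rewrite -[1 - _ - e2]addrA -opprD addrC addNKr.
have col : a * (a * x) = b * (a * x).
  by apply: (blocks_eq_mulr one); rewrite ?a11 ?b11 ?a21 ?b21 ?a31 ?b31.
have row : a * x * a = a * x * b.
  by apply: (blocks_eq_mull one); rewrite ?a11 ?b11 ?a12 ?b12 ?a13 ?b13.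
split; first by rewrite -(gcEP_axx hx) mulrA col -mulrA.
by rewrite -(gcEP_x_proj hx) -mulrA row mulrA.
Qed.

End BanachStarAlgebra.

Theorem theorem4p4 (R : realType) (A : banachStarAlgType R) (a b : A)
  (ha : has_gcEP a) (hb : has_gcEP b) :
  gcEP_le a b <->
  (let e1 := a * gcEP a in
   exists e2 : A,
     e2 = star e2 /\ e2 = e2 * e2 /\ e1 * e2 = 0 /\ e2 * e1 = 0 /\
     let e3 := 1 - e1 - e2 in
     exists (t1 s1 s2 n1 n2 n3 n4 t3 t4 t5 : A),
       (* matrix form of a w.r.t. e = {e1, e2, e3} *)
       (e1 * a * e1 = t1 /\ e1 * a * e2 = s1 /\ e1 * a * e3 = s2 /\
        e2 * a * e1 = 0  /\ e2 * a * e2 = n1 /\ e2 * a * e3 = n2 /\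
        e3 * a * e1 = 0  /\ e3 * a * e2 = n3 /\ e3 * a * e3 = n4) /\
       (* matrix form of b w.r.t. e = {e1, e2, e3} *)
       (e1 * b * e1 = t1 /\ e1 * b * e2 = s1 /\ e1 * b * e3 = s2 /\
        e2 * b * e1 = 0  /\ e2 * b * e2 = t3 /\ e2 * b * e3 = t4 /\
        e3 * b * e1 = 0  /\ e3 * b * e2 = 0  /\ e3 * b * e3 = t5) /\
       corner_inv e1 t1 /\ corner_inv e2 t3 /\
       qnil (n1 + n2 + n3 + n4) /\ qnil t5).
Proof.
have hx : is_gcEP a (gcEP a) := xgetPex 0 ha.
have hy : is_gcEP b (gcEP b) := xgetPex 0 hb.
split=> [[le_r le_l] | forms]; first exact: gcEP_corner_forms_of_le hx hy le_r le_l.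
exact: gcEP_le_of_corner_forms hx forms.
Qed.
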